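(* Let $G^\sigma$ be a connected oriented graph of order $n\geq 5$. Then $sr(G^\sigma)=2$ if and only if the underlying graph of $G^\sigma$ is a complete bipartite graph or a complete tripartite graph and every cycle of length $4$ in $G^\sigma$ is evenly-oriented.
   Context: An oriented graph $G^\sigma$ is a simple graph $G$ (underlying graph) together with an orientation of each edge. Its skew-adjacency matrix $S(G^\sigma)=(s_{ij})$ has $s_{ij}=1$ if there is an arc from $v_i$ to $v_j$, $s_{ij}=-1$ if there is an arc from $v_j$ to $v_i$, and $0$ otherwise; the skew-rank $sr(G^\sigma)$ is the rank of $S(G^\sigma)$. For an even cycle $u_1\cdots u_ku_1$, its sign is the sign of $\prod_{i=1}^k s_{u_iu_{i+1}}$ ($u_{k+1}=u_1$); the cycle is evenly-oriented if this sign is positive and oddly-oriented if negative. *)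

From mathcomp Require Import all_boot all_order all_algebra.
Set Implicit Arguments. Unset Strict Implicit. Unset Printing Implicit Defensive.
Import Order.TTheory GRing.Theory Num.Theory.
Local Open Scope ring_scope.

Definition oriented_graph (n : nat) (arc : rel 'I_n) : Prop :=
  (forall u, ~~ arc u u) /\ (forall u v, arc u v -> ~~ arc v u).

Definition und (n : nat) (arc : rel 'I_n) : rel 'I_n :=
  fun u v => arc u v || arc v u.

Definition sgn_entry (n : nat) (arc : rel 'I_n) (u v : 'I_n) : int :=
  if arc u v then 1 else if arc v u then -1 else 0.

Definition skew_adj (n : nat) (arc : rel 'I_n) : 'M[rat]_n :=
  \matrix_(i, j) (sgn_entry arc i j)%:~R.

Definition skew_rank (n : nat) (arc : rel 'I_n) : nat := \rank (skew_adj arc).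

Definition connected_graph (n : nat) (e : rel 'I_n) : Prop :=
  forall u v, connect e u v.

Definition complete_multipartite (n k : nat) (e : rel 'I_n) : Prop :=
  exists part : 'I_n -> 'I_k,
    (forall c : 'I_k, exists v, part v = c) /\
    (forall u v, e u v = (part u != part v)).

Definition is_4cycle (n : nat) (e : rel 'I_n) (u1 u2 u3 u4 : 'I_n) : Prop :=
  uniq [:: u1; u2; u3; u4] /\ e u1 u2 /\ e u2 u3 /\ e u3 u4 /\ e u4 u1.

Definition evenly_oriented4 (n : nat) (arc : rel 'I_n) (u1 u2 u3 u4 : 'I_n) : Prop :=
  0 < sgn_entry arc u1 u2 * sgn_entry arc u2 u3 * sgn_entry arc u3 u4
      * sgn_entry arc u4 u1.

(* The skew-adjacency matrix S is alternating, so rank S <= 2 iff every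
   principal 4x4 Pfaffian s_ij s_kl - s_ik s_jl + s_il s_jk vanishes: its square
   is the corresponding 4x4 minor, and conversely, given s_pq <> 0, the
   Pfaffians through p and q write S as a product of an n x 2 and a 2 x n matrix.
   With entries in {0, 1, -1} the vanishing of the Pfaffians is a finite
   condition on four vertices: non-adjacency is transitive (using a neighbour of
   the middle vertex, which exists by connectedness), there is no K4, and every
   4-cycle is evenly oriented; conversely these conditions make all Pfaffians
   vanish. Transitive non-adjacency without K4 means complete multipartite with
   at most three parts. *)

From mathcomp Require Import all_boot all_order all_algebra.
From mathcomp Require Import ring zify.
Set Implicit Arguments. Unset Strict Implicit. Unset Printing Implicit Defensive.
Import Order.TTheory GRing.Theory Num.Theory.
Local Open Scope ring_scope.

Definition pfaff4 (R : pzRingType) n (m : 'I_n -> 'I_n -> R) (i j k l : 'I_n) : R :=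
  m i j * m k l - m i k * m j l + m i l * m j k.

Lemma rank_le2_factor (F : fieldType) n (A : 'M[F]_n) :
  (\rank A <= 2)%N -> exists (C : 'M[F]_(n, 2)) (R : 'M[F]_(2, n)), A = C *m R.
Proof.
move=> rA; exists (col_ebase A *m pid_mx (\rank A)), (pid_mx (\rank A) *m row_ebase A).
by rewrite mulmxA -(mulmxA (col_ebase A)) pid_mx_id // mulmx_ebase.
Qed.

Lemma rank_le2_of_pfaff4 (F : fieldType) n (A : 'M[F]_n) p q :
  A p q != 0 -> (forall x y, pfaff4 A p q x y = 0) -> (\rank A <= 2)%N.
Proof.
move=> Apq pf0.
pose C : 'M[F]_(n, 2) := \matrix_(x, c) (if val c == 0%N then A p x else A q x).
pose R : 'M[F]_(2, n) := \matrix_(c, y) ((if val c == 0%N then A q y else - A p y) / A p q).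
have -> : A = C *m R.
  apply/matrixP => x y; rewrite !mxE !big_ord_recr big_ord0 /= !mxE /=.
  have Exy : A p q * A x y = A p x * A q y - A p y * A q x.
    by apply/eqP; rewrite -subr_eq0 -(pf0 x y) /pfaff4; apply/eqP; ring.
  by rewrite -[A x y](mulKf Apq) Exy; field.
exact: leq_trans (mxrankM_maxl _ _) (rank_leq_col _).
Qed.

Section AlternatingMatrix.

Variables (F : fieldType) (n : nat) (A : 'M[F]_n).
Hypothesis A_diag : forall x, A x x = 0.
Hypothesis A_skew : forall x y, A y x = - A x y.

(* [A j k * pfaff4 A i j k l] expands along the row i into 3x3 minors of A. *)
Lemma mul_pfaff4_factor2 (C : 'M[F]_(n, 2)) (R : 'M[F]_(2, n)) i j k l :
  A = C *m R -> A j k * pfaff4 A i j k l = 0.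
Proof.
move=> defA.
have -> : A j k * pfaff4 A i j k l = A i j * (A j k * A k l - A j l * A k k)
    - A i k * (A j j * A k l - A j l * A k j) + A i l * (A j j * A k k - A j k * A k j).
  by rewrite (A_diag k) (A_diag j) (A_skew j k) /pfaff4; ring.
rewrite defA !mxE !big_ord_recr !big_ord0 /=; ring.
Qed.

Lemma pfaff4_eq0_of_mul :
  (forall i j k l, A j k * pfaff4 A i j k l = 0) -> forall i j k l, pfaff4 A i j k l = 0.
Proof.
move=> mul0 i j k l.
suff : pfaff4 A i j k l * pfaff4 A i j k l = 0 by move/eqP; rewrite mulf_eq0 orbb => /eqP.
have E1 : pfaff4 A k i j l = pfaff4 A i j k l by rewrite /pfaff4 (A_skew i k) (A_skew j k); ring.
have E2 : pfaff4 A j i k l = - pfaff4 A i j k l by rewrite /pfaff4 (A_skew i j); ring.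
have E3 : pfaff4 A j i l k = pfaff4 A i j k l by rewrite /pfaff4 (A_skew i j) (A_skew k l); ring.
have H1 := mul0 k i j l; have H2 := mul0 j i k l; have H3 := mul0 j i l k.
rewrite E1 in H1; rewrite E3 in H3; move/eqP: H2; rewrite E2 mulrN oppr_eq0 => /eqP H2.
(* pfaff4^2 is a combination of the three vanishing products *)
transitivity (A k l * (A i j * pfaff4 A i j k l) - A j l * (A i k * pfaff4 A i j k l)
   + A j k * (A i l * pfaff4 A i j k l)); first by rewrite {1}/pfaff4; ring.
by rewrite H1 H2 H3; ring.
Qed.

Lemma pfaff4_eq0_of_rank_le2 : (\rank A <= 2)%N -> forall i j k l, pfaff4 A i j k l = 0.
Proof.
move=> /rank_le2_factor [C [R defA]]; apply: pfaff4_eq0_of_mul => i j k l.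
exact: mul_pfaff4_factor2 defA.
Qed.

Lemma rank_ge2_of_entry p q : A p q != 0 -> (2 <= \rank A)%N.
Proof.
move=> Apq.
pose f (c : 'I_2) := if c == ord0 then p else q.
pose g (c : 'I_2) := if c == ord0 then q else p.
have sub_le : (\rank (mxsub f g A) <= \rank A)%N.
  rewrite -[A in mxsub _ _ A]mul1mx mxsub_mul -[A in colsub _ A]mulmx1 -mulmx_colsub.
  exact: leq_trans (mxrankM_maxr _ _) (mxrankM_maxl _ _).
apply: leq_trans sub_le.
have inv_sub : mxsub f g A *m ((A p q)^-2 *: mxsub f g A) = 1%:M.
  apply/matrixP => x y; rewrite !mxE big_ord_recr big_ord_recr big_ord0 /= !mxE /f /g.
  by case: x => [[|[|x]] Hx] //; case: y => [[|[|y]] Hy] //=;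
     rewrite ?A_diag ?(A_skew p q); field.
by have [unit_sub _] := mulmx1_unit inv_sub; rewrite mxrank_unit.
Qed.

End AlternatingMatrix.

Lemma pfaff4_eq0_of_not_uniq (R : comPzRingType) n (m : 'I_n -> 'I_n -> R) :
  (forall x, m x x = 0) -> (forall x y, m y x = - m x y) ->
  forall i j k l, ~~ uniq [:: i; j; k; l] -> pfaff4 m i j k l = 0.
Proof.
move=> diag skew i j k l; rewrite /= !inE !negb_or andbT -!andbA !negb_and !negbK.
move=> /orP[/eqP->|/orP[/eqP->|/orP[/eqP->|/orP[/eqP->|/orP[/eqP->|/eqP->]]]]];
  rewrite /pfaff4 ?diag; first [ring | rewrite (skew k j); ring
  | rewrite (skew l j) (skew l k); ring | rewrite (skew l k); ring].
Qed.

Lemma ord_pigeonhole4 k (a b c d : 'I_k) :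
  (k <= 3)%N -> ~~ [&& a != b, a != c, a != d, b != c, b != d & c != d].
Proof. by case: a b c d => [a ?] [b ?] [c ?] [d ?]; rewrite -!val_eqE /= => ?; lia. Qed.

Definition is_sign (x : int) : bool := x \in [:: 0; 1; -1].

Definition zero_closed (x y z : int) : bool :=
  [&& (x == 0) && (y == 0) ==> (z == 0), (x == 0) && (z == 0) ==> (y == 0)
    & (y == 0) && (z == 0) ==> (x == 0)].

Definition even_if_nonzero (x y z w : int) : bool :=
  [&& x != 0, y != 0, z != 0 & w != 0] ==> (0 < x * y * z * w).

Ltac case_sign H := move: H; rewrite /is_sign !inE => /or3P [] /eqP ->.

(* In the next three lemmas, a, b, c, d, e, f stand for the entries
   s_pq, s_pi, s_pj, s_qi, s_qj, s_ij on four vertices p, q, i, j, so that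
   a * f - b * e + c * d is pfaff4 s p q i j. *)
Lemma sign_pfaff_cycle_even (a b c d e f : int) :
  is_sign a -> is_sign b -> is_sign c -> is_sign d -> is_sign e -> is_sign f ->
  a * f - b * e + c * d = 0 -> a != 0 -> c != 0 -> d != 0 -> f != 0 ->
  0 < a * d * f * - c.
Proof.
move=> Ha Hb Hc Hd He Hf.
by case_sign Ha; case_sign Hb; case_sign Hc; case_sign Hd; case_sign He; case_sign Hf.
Qed.

Lemma sign_pfaff_neq0 (a b c d e f : int) :
  is_sign a -> is_sign b -> is_sign c -> is_sign d -> is_sign e -> is_sign f ->
  [&& a != 0, b != 0, c != 0, d != 0, e != 0 & f != 0] -> a * f - b * e + c * d != 0.
Proof.
move=> Ha Hb Hc Hd He Hf.
by case_sign Ha; case_sign Hb; case_sign Hc; case_sign Hd; case_sign He; case_sign Hf.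
Qed.

Lemma sign_pfaff_eq0 (a b c d e f : int) :
  is_sign a -> is_sign b -> is_sign c -> is_sign d -> is_sign e -> is_sign f ->
  zero_closed a d b -> zero_closed a e c -> zero_closed b f c -> zero_closed d f e ->
  ~~ [&& a != 0, b != 0, c != 0, d != 0, e != 0 & f != 0] ->
  even_if_nonzero a d f (- c) -> even_if_nonzero a e (- f) (- b) ->
  even_if_nonzero b (- d) e (- c) ->
  a * f - b * e + c * d = 0.
Proof.
move=> Ha Hb Hc Hd He Hf.
by case_sign Ha; case_sign Hb; case_sign Hc; case_sign Hd; case_sign He; case_sign Hf.
Qed.

Lemma connected_exists_edge n (e : rel 'I_n) :
  (1 < n)%N -> connected_graph e -> exists u v, e u v.
Proof.
move=> n_gt1 conn; have /connectP [[|t p] /=] := conn (Ordinal (ltnW n_gt1)) (Ordinal n_gt1).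
  by move=> _ /(congr1 val).
by case/andP => e0t _ _; exists (Ordinal (ltnW n_gt1)), t.
Qed.

Section SimpleGraph.

Variables (n : nat) (e : rel 'I_n).
Hypothesis e_sym : symmetric e.
Hypothesis e_irr : irreflexive e.
Hypothesis nonadj_trans : forall x y z, ~~ e x y -> ~~ e y z -> ~~ e x z.

(* Non-adjacency is an equivalence relation; its classes are the parts. *)
Lemma complete_multipartite_of_reps k (rep : 'I_k -> 'I_n) :
  (forall c d, c != d -> e (rep c) (rep d)) -> (forall x, exists c, ~~ e x (rep c)) ->
  complete_multipartite k e.
Proof.
move=> rep_adj rep_cover.
pose part x := xchoose (rep_cover x).
have part_rep x : ~~ e x (rep (part x)) := xchooseP (rep_cover x).
have part_eq x c : ~~ e x (rep c) -> part x = c.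
  move=> nxc; apply: (contraNeq (@rep_adj _ _)).
  by apply: nonadj_trans _ nxc; rewrite e_sym.
exists part; split=> [c | x y]; first by exists (rep c); apply: part_eq; rewrite e_irr.
apply/idP/idP => [|neq_part]; first apply: contraTneq => same_part.
  by apply: nonadj_trans (part_rep x) _; rewrite e_sym same_part.
apply: contraR neq_part => nxy; apply/eqP/esym/part_eq.
by apply: nonadj_trans (part_rep x); rewrite e_sym.
Qed.

Lemma complete_multipartite23 u v :
  (forall a b c d, e a b -> e a c -> e a d -> e b c -> e b d -> ~~ e c d) ->
  e u v -> complete_multipartite 2 e \/ complete_multipartite 3 e.
Proof.
move=> K4_free euv; have evu : e v u by rewrite e_sym.
have [/existsP [w /andP [euw evw]] | /existsPn no_common] := boolP [exists w, e u w && e v w].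
- right; apply: (@complete_multipartite_of_reps 3 (nth u [:: u; v; w])).
    have ewu : e w u by rewrite e_sym.
    have ewv : e w v by rewrite e_sym.
    by move=> [[|[|[|?]]] ?] [[|[|[|?]]] ?].
  move=> x; case exu: (e x u); last by exists ord0; rewrite /= exu.
  case exv: (e x v); last by exists (Ordinal (isT : (1 < 3)%N)); rewrite /= exv.
  by exists ord_max; apply: K4_free euv _ euw _ evw; rewrite e_sym.
- left; apply: (@complete_multipartite_of_reps 2 (nth u [:: u; v])).
    by move=> [[|[|?]] ?] [[|[|?]] ?].
  move=> x; case exu: (e x u); last by exists ord0; rewrite /= exu.
  by exists ord_max; apply: contra (no_common x) => /= exv; rewrite !(e_sym _ x) exu.
Qed.

End SimpleGraph.

Section OrientedGraph.

Variables (n : nat) (arc : rel 'I_n).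
Hypothesis arc_oriented : oriented_graph arc.

Local Notation s := (sgn_entry arc).
Local Notation e := (und arc).

Lemma sgn_entry_sign x y : is_sign (s x y).
Proof. by rewrite /sgn_entry /is_sign; case: (arc x y); case: (arc y x). Qed.

Lemma sgn_entry_eq0 x y : (s x y == 0) = ~~ e x y.
Proof. by rewrite /sgn_entry /und; case: (arc x y); case: (arc y x). Qed.

Lemma sgn_entry_neq0 x y : (s x y != 0) = e x y.
Proof. by rewrite sgn_entry_eq0 negbK. Qed.

Lemma sgn_entry_diag x : s x x = 0.
Proof. by case: arc_oriented => irr _; rewrite /sgn_entry (negbTE (irr x)). Qed.

Lemma sgn_entry_skew x y : s y x = - s x y.
Proof.
case: arc_oriented => _ asym; rewrite /sgn_entry.
by case exy: (arc x y); case eyx: (arc y x) => //; move: (asym _ _ exy); rewrite eyx.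
Qed.

Lemma und_sym : symmetric e.
Proof. by move=> x y; rewrite /und orbC. Qed.

Lemma und_irr : irreflexive e.
Proof. by move=> x; rewrite -sgn_entry_neq0 sgn_entry_diag. Qed.

Lemma skew_adj_diag x : skew_adj arc x x = 0.
Proof. by rewrite mxE sgn_entry_diag. Qed.

Lemma skew_adj_skew x y : skew_adj arc y x = - skew_adj arc x y.
Proof. by rewrite !mxE sgn_entry_skew intrN. Qed.

Lemma skew_adj_neq0 x y : (skew_adj arc x y != 0) = e x y.
Proof. by rewrite mxE intr_eq0 sgn_entry_neq0. Qed.

Lemma pfaff4_skew_adj i j k l : pfaff4 (skew_adj arc) i j k l = (pfaff4 s i j k l)%:~R.
Proof. by rewrite /pfaff4 !mxE intrD intrB !intrM. Qed.

Lemma pfaff4_sgn_eq0_of_skew_rank :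
  (skew_rank arc <= 2)%N -> forall i j k l, pfaff4 s i j k l = 0.
Proof.
move=> rank_le2 i j k l; apply/eqP; rewrite -(intr_eq0 rat) -pfaff4_skew_adj.
by rewrite (pfaff4_eq0_of_rank_le2 skew_adj_diag skew_adj_skew rank_le2).
Qed.

Section VanishingPfaffians.

Hypothesis pfaff4_sgn_eq0 : forall i j k l, pfaff4 s i j k l = 0.

Lemma even_4cycle_of_pfaff4 u1 u2 u3 u4 :
  is_4cycle e u1 u2 u3 u4 -> evenly_oriented4 arc u1 u2 u3 u4.
Proof.
move=> [_ [e12 [e23 [e34 e41]]]]; rewrite /evenly_oriented4 (sgn_entry_skew u1 u4).
apply: (sign_pfaff_cycle_even (sgn_entry_sign _ _) (sgn_entry_sign u1 u3)
  (sgn_entry_sign _ _) (sgn_entry_sign _ _) (sgn_entry_sign u2 u4) (sgn_entry_sign _ _)).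
- exact: pfaff4_sgn_eq0 u1 u2 u3 u4.
all: by rewrite sgn_entry_neq0 // und_sym.
Qed.

(* The neighbour t of y makes pfaff4 s x z y t equal to s_xz * s_yt. *)
Lemma nonadj_trans_of_pfaff4 :
  connected_graph e -> forall x y z, ~~ e x y -> ~~ e y z -> ~~ e x z.
Proof.
move=> conn x y z nxy nyz; apply/negP => exz.
have [t eyt] : exists t, e y t.
  have /connectP [[|t p] /=] := conn y x; last by case/andP => eyt _ _; exists t.
  by move=> _ yx; rewrite -yx exz in nyz.
have sxy : s x y = 0 by apply/eqP; rewrite sgn_entry_eq0.
have szy : s z y = 0 by apply/eqP; rewrite sgn_entry_eq0 und_sym.
move: (pfaff4_sgn_eq0 x z y t) => /eqP.
by rewrite /pfaff4 sxy szy mul0r mulr0 subr0 addr0 mulf_eq0 !sgn_entry_eq0 exz eyt.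
Qed.

Lemma K4_free_of_pfaff4 a b c d :
  e a b -> e a c -> e a d -> e b c -> e b d -> ~~ e c d.
Proof.
move=> eab eac ead ebc ebd; apply/negP => ecd.
have := sign_pfaff_neq0 (sgn_entry_sign a b) (sgn_entry_sign a c) (sgn_entry_sign a d)
  (sgn_entry_sign b c) (sgn_entry_sign b d) (sgn_entry_sign c d).
rewrite !sgn_entry_neq0 eab eac ead ebc ebd ecd -/(pfaff4 s a b c d) pfaff4_sgn_eq0.
by rewrite eqxx => /(_ isT).
Qed.

End VanishingPfaffians.

Lemma pfaff4_sgn_eq0_of_multipartite k (part : 'I_n -> 'I_k) :
  (k <= 3)%N -> (forall u v, e u v = (part u != part v)) ->
  (forall u1 u2 u3 u4, is_4cycle e u1 u2 u3 u4 -> evenly_oriented4 arc u1 u2 u3 u4) ->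
  forall p q i j, pfaff4 s p q i j = 0.
Proof.
move=> k_le3 part_adj cycle_even p q i j.
have [uniq_pqij | ] := boolP (uniq [:: p; q; i; j]); last first.
  exact: pfaff4_eq0_of_not_uniq sgn_entry_diag sgn_entry_skew p q i j.
have closed x y z : zero_closed (s x y) (s y z) (s x z).
  rewrite /zero_closed !sgn_entry_eq0 !part_adj !negbK.
  by apply/and3P; split; apply/implyP => /andP [/eqP-> /eqP->].
have even w x y z : uniq [:: w; x; y; z] -> even_if_nonzero (s w x) (s x y) (s y z) (s z w).
  move=> uniq_wxyz; apply/implyP => /and4P [swx sxy syz szw]; apply: cycle_even.
  by move: swx sxy syz szw; rewrite /is_4cycle !sgn_entry_neq0.
have perm_uniq_pqij (r : seq 'I_n) : perm_eq r [:: p; q; i; j] -> uniq r.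
  by move/perm_uniq->.
rewrite /pfaff4; apply: (sign_pfaff_eq0 (sgn_entry_sign p q) (sgn_entry_sign p i)
  (sgn_entry_sign p j) (sgn_entry_sign q i) (sgn_entry_sign q j) (sgn_entry_sign i j)).
- exact: closed.
- exact: closed.
- exact: closed.
- exact: closed.
- by rewrite !sgn_entry_neq0 !part_adj ord_pigeonhole4.
- by rewrite -(sgn_entry_skew p j); apply: even.
- rewrite -(sgn_entry_skew i j) -(sgn_entry_skew p i).
  by apply/even/perm_uniq_pqij/permP => ? /=; lia.
- rewrite -(sgn_entry_skew q i) -(sgn_entry_skew p j).
  by apply/even/perm_uniq_pqij/permP => ? /=; lia.
Qed.

Lemma skew_rank_eq2_of_multipartite k :
  (1 < k <= 3)%N -> complete_multipartite k e ->
  (forall u1 u2 u3 u4, is_4cycle e u1 u2 u3 u4 -> evenly_oriented4 arc u1 u2 u3 u4) ->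
  skew_rank arc = 2%N.
Proof.
case/andP=> k_gt1 k_le3 [part [part_surj part_adj]] cycle_even.
have [p part_p] := part_surj (Ordinal (ltnW k_gt1)).
have [q part_q] := part_surj (Ordinal k_gt1).
have Apq : skew_adj arc p q != 0 by rewrite skew_adj_neq0 part_adj part_p part_q.
have pf0 := pfaff4_sgn_eq0_of_multipartite k_le3 part_adj cycle_even.
apply/eqP; rewrite /skew_rank eqn_leq.
rewrite (rank_ge2_of_entry skew_adj_diag skew_adj_skew Apq) andbT.
by apply: (rank_le2_of_pfaff4 Apq) => x y; rewrite pfaff4_skew_adj pf0.
Qed.

End OrientedGraph.

Theorem theorem3p3 (n : nat) (arc : rel 'I_n) :
  (5 <= n)%N ->
  oriented_graph arc ->
  connected_graph (und arc) ->
  (skew_rank arc = 2%N <->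
   ((complete_multipartite 2 (und arc) \/ complete_multipartite 3 (und arc)) /\
    (forall u1 u2 u3 u4 : 'I_n, is_4cycle (und arc) u1 u2 u3 u4 ->
        evenly_oriented4 arc u1 u2 u3 u4))).
Proof.
move=> n_ge5 arc_oriented conn; split=> [rank2 | [[multi | multi] cycle_even]].
- have pf0 := pfaff4_sgn_eq0_of_skew_rank arc_oriented (eq_leq rank2).
  split; last exact: even_4cycle_of_pfaff4.
  (* n >= 5 is only used here, to provide an edge *)
  have [u [v euv]] := connected_exists_edge (leq_trans (isT : (1 < 5)%N) n_ge5) conn.
  exact: (complete_multipartite23 (und_sym arc) (und_irr arc_oriented)
    (nonadj_trans_of_pfaff4 pf0 conn) (K4_free_of_pfaff4 pf0) euv).
- exact: (skew_rank_eq2_of_multipartite arc_oriented (isT : (1 < 2 <= 3)%N) multi cycle_even).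
- exact: (skew_rank_eq2_of_multipartite arc_oriented (isT : (1 < 3 <= 3)%N) multi cycle_even).
Qed.
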